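(* Let $L$ be a Lie algebra and $I$ an ideal of $L$ with $I\subseteq Z^{*}_2(L)$. Then the natural Lie homomorphism $\mathcal{M}^{(2)}(L)\to\mathcal{M}^{(2)}(L/I)$ is a monomorphism.
   Context: All Lie algebras are over a fixed field. For $L$ with free presentation $L\cong F/R$, the $2$-nilpotent multiplier is $\mathcal{M}^{(2)}(L)=(R\cap F^{3})/[[R,F],F]$ with $F^3=[[F,F],F]$; if $I\cong S/R$ with $R\subseteq S$, then $L/I\cong F/S$ and the natural homomorphism $\mathcal{M}^{(2)}(L)\to\mathcal{M}^{(2)}(L/I)=(S\cap F^3)/[[S,F],F]$ is induced by inclusion. With $\pi:F/[[R,F],F]\to F/R$ the natural epimorphism, $Z^{*}_2(L)=\pi\big(Z_2(F/[[R,F],F])\big)$, where $Z_2$ denotes the second term of the upper central series. *)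

(* Lie algebras over a field K, possibly infinite-dimensional.
   Subspaces are represented as predicates on the carrier. *)
From HB Require Import structures.
From mathcomp Require Import all_boot all_algebra.
Set Implicit Arguments. Unset Strict Implicit. Unset Printing Implicit Defensive.
Import GRing.Theory.
Local Open Scope ring_scope.

Record lieAlgebra (K : fieldType) := LieAlgebra {
  lie_carrier :> lmodType K;
  lie_br : lie_carrier -> lie_carrier -> lie_carrier;
  lie_br_linl : forall (a : K) (x y z : lie_carrier),
      lie_br (a *: x + y) z = a *: lie_br x z + lie_br y z;
  lie_br_linr : forall (a : K) (x y z : lie_carrier),
      lie_br z (a *: x + y) = a *: lie_br z x + lie_br z y;
  lie_br_alt : forall x : lie_carrier, lie_br x x = 0;
  lie_jacobi : forall x y z : lie_carrier,
      lie_br x (lie_br y z) + lie_br y (lie_br z x) + lie_br z (lie_br x y) = 0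
}.

Section LieDefs.
Variable K : fieldType.

Definition is_subspace (L : lieAlgebra K) (V : L -> Prop) : Prop :=
  V 0 /\ forall (a : K) (x y : L), V x -> V y -> V (a *: x + y).

Definition span (L : lieAlgebra K) (A : L -> Prop) : L -> Prop :=
  fun x => forall V : L -> Prop, is_subspace V -> (forall a, A a -> V a) -> V x.

Definition brsub (L : lieAlgebra K) (A B : L -> Prop) : L -> Prop :=
  span (fun x => exists a b, A a /\ B b /\ x = lie_br a b).

Definition fullset (L : lieAlgebra K) : L -> Prop := fun _ => True.

Definition is_ideal (L : lieAlgebra K) (I : L -> Prop) : Prop :=
  is_subspace I /\ forall x y : L, I x -> I (lie_br x y).

Definition is_lie_hom (L M : lieAlgebra K) (f : L -> M) : Prop :=
  (forall (a : K) (x y : L), f (a *: x + y) = a *: f x + f y) /\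
  (forall x y : L, f (lie_br x y) = lie_br (f x) (f y)).

Definition is_free_lie (X : Type) (F : lieAlgebra K) (iota : X -> F) : Prop :=
  forall (M : lieAlgebra K) (f : X -> M),
    (exists g : F -> M, is_lie_hom g /\ forall x, g (iota x) = f x) /\
    (forall g1 g2 : F -> M, is_lie_hom g1 -> is_lie_hom g2 ->
       (forall x, g1 (iota x) = f x) -> (forall x, g2 (iota x) = f x) ->
       forall y, g1 y = g2 y).

(* For an ideal N of F, the preimage in F of Z_2(F/N), the second term of the
   upper central series of F/N:  x + N in Z_2(F/N)  iff  [[x,y],z] in N for
   all y, z  (Z_1(F/N) = {x+N | [x,F] <= N}, Z_2/Z_1 = Z((F/N)/Z_1)). *)
Definition Z2_preimage (F : lieAlgebra K) (N : F -> Prop) : F -> Prop :=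
  fun x => forall y z : F, N (lie_br (lie_br x y) z).

(* Z^*_2(L) = pi(Z_2(F/[[R,F],F])) for the presentation pi : F -> L, R = ker pi *)
Definition Z2star (F L : lieAlgebra K) (pi : F -> L) : L -> Prop :=
  let R := fun x : F => pi x = 0 in
  fun l => exists x : F,
      Z2_preimage (brsub (brsub R (@fullset F)) (@fullset F)) x /\ pi x = l.

(* For subspaces B <= A and D of F, the natural map A/B -> (A+D)/D,
   x + B |-> x + D, induced by inclusion, is injective. *)
Definition induced_map_injective (F : lieAlgebra K) (A B D : F -> Prop) : Prop :=
  forall x y : F, A x -> A y -> D (x - y) -> B (x - y).

End LieDefs.

From Pilot Require Import Defs.
From mathcomp Require Import all_boot all_algebra.
Local Open Scope ring_scope.
Import GRing.Theory.

(* If I <= Z^*_2(L), every s in S = pi^-1(I) splits as s = r + w with r in R and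
   w + [[R,F],F] in Z_2(F/[[R,F],F]); hence [[s,f],g] lies in [[R,F],F] for all
   f, g, i.e. [[S,F],F] = [[R,F],F].  The kernel of M^(2)(L) -> M^(2)(L/I),
   which is (R cap F^3 cap [[S,F],F])/[[R,F],F], is therefore zero. *)

Section Brackets.
Variables (K : fieldType) (L : lieAlgebra K).

Lemma subspaceD (V : L -> Prop) (u v : L) :
  is_subspace V -> V u -> V v -> V (u + v).
Proof. by move=> [_ closedV] Vu Vv; rewrite -[u]scale1r; apply: closedV. Qed.

Lemma span_subspace (A : L -> Prop) : is_subspace (Defs.span A).
Proof.
split=> [V [V0 _] _ // | a x y spx spy V subV AV].
by have [_ closedV] := subV; apply: closedV; [apply: spx | apply: spy].
Qed.

Lemma brsub_gen (A B : L -> Prop) (a b : L) :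
  A a -> B b -> brsub A B (lie_br a b).
Proof. by move=> Aa Bb V _; apply; exists a, b. Qed.

Lemma brsub_min (A B V : L -> Prop) :
  is_subspace V -> (forall a b, A a -> B b -> V (lie_br a b)) ->
  forall x, brsub A B x -> V x.
Proof. by move=> subV brV x; apply=> // _ [a [b [Aa [Bb ->]]]]; apply: brV. Qed.

Lemma lie_brDl (u v z : L) : lie_br (u + v) z = lie_br u z + lie_br v z.
Proof. by have := lie_br_linl 1 u v z; rewrite !scale1r. Qed.

Lemma lie_br0l (z : L) : lie_br 0 z = 0.
Proof. by apply: (@addrI _ (lie_br 0 z)); rewrite -lie_brDl !addr0. Qed.

Lemma subspace_br_preimage (N : L -> Prop) :
  is_subspace N -> is_subspace (fun a => forall g, N (lie_br a g)).
Proof.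
move=> [N0 closedN]; split=> [g | c u v Nu Nv g]; first by rewrite lie_br0l.
by rewrite lie_br_linl; apply: closedN.
Qed.

Lemma brsub2_min (S N : L -> Prop) :
  is_subspace N -> (forall s f g, S s -> N (lie_br (lie_br s f) g)) ->
  forall x, brsub (brsub S (@fullset _ L)) (@fullset _ L) x -> N x.
Proof.
move=> subN brN.
have brsubS_br :
    forall a, brsub S (@fullset _ L) a -> forall g, N (lie_br a g).
  apply: (@brsub_min S _ (fun a => forall g, N (lie_br a g))) => [|s f Ss _ g].
  - exact: subspace_br_preimage.
  - exact: brN.
by apply: brsub_min => // a g /brsubS_br.
Qed.

Lemma brsub2_Z2_preimage (R : L -> Prop) (r w f g : L) :
  R r -> Z2_preimage (brsub (brsub R (@fullset _ L)) (@fullset _ L)) w ->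
  brsub (brsub R (@fullset _ L)) (@fullset _ L) (lie_br (lie_br (r + w) f) g).
Proof.
move=> Rr Z2w; rewrite !lie_brDl.
apply: subspaceD (Z2w f g); first exact: span_subspace.
by apply: brsub_gen => //; apply: brsub_gen.
Qed.

End Brackets.

Theorem theorem3p2 (K : fieldType) (L : lieAlgebra K) (I : L -> Prop)
    (X : Type) (F : lieAlgebra K) (iota : X -> F) (pi : F -> L) :
  is_ideal I ->
  is_free_lie iota ->
  is_lie_hom pi ->
  (forall l : L, exists x : F, pi x = l) ->
  (forall l : L, I l -> Z2star pi l) ->
  let R : F -> Prop := fun x => pi x = 0 in
  let S : F -> Prop := fun x => I (pi x) in
  let F3 : F -> Prop := brsub (brsub (@fullset _ F) (@fullset _ F)) (@fullset _ F) in
  induced_map_injective (fun x => R x /\ F3 x)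
    (brsub (brsub R (@fullset _ F)) (@fullset _ F))
    (brsub (brsub S (@fullset _ F)) (@fullset _ F)).
Proof.
move=> _ _ [pi_linear _] _ I_Z2star R S F3 x y _ _.
apply: brsub2_min; first exact: span_subspace.
move=> s f g /I_Z2star [w [Z2w pi_w]].
have R_sw : R (s - w).
  by rewrite /R -scaleN1r addrC pi_linear pi_w scaleN1r addNr.
by rewrite -(subrK w s); apply: brsub2_Z2_preimage.
Qed.
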